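(* Let $\mathbb{F}$ be a field, $d\geq3$ and $V$ a vector space over $\mathbb{F}$ of dimension $d+1$. Let $E^*_0,\dots,E^*_d$ be a system of mutually orthogonal idempotents in $\mathrm{End}(V)$ and $A\in\mathrm{End}(V)$ with $E^*_iAE^*_j=0$ if $|i-j|>1$ and $E^*_iAE^*_j\neq0$ if $|i-j|=1$. Assume $A$ is multiplicity-free and bipartite with primitive idempotents $E_0,\dots,E_d$. Let $\theta^*_0,\dots,\theta^*_d\in\mathbb{F}$ be mutually distinct and $A^*=\sum_i\theta^*_iE^*_i$. Assume $E_0$ is normalizing and $(E_0,E_1)$ is a tail. Then $\dfrac{\theta^*_j-\theta^*_{j-3}}{\theta^*_{j-1}-\theta^*_{j-2}}$ is independent of $j$ for $3\le j\le d$.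
   Context: A system of mutually orthogonal idempotents: $E^*_iE^*_j=\delta_{ij}E^*_i$, $\operatorname{rank}E^*_i=1$. $A$ multiplicity-free: $d+1$ distinct eigenvalues in $\mathbb{F}$; the primitive idempotent for an eigenvalue is the projection onto its eigenspace along the other eigenspaces. Bipartite: $\operatorname{tr}(E^*_iA)=0$ for all $i$. $\Delta$: graph on $E_0,\dots,E_d$ with $E_i\neq E_j$ adjacent iff $E_iA^*E_j\neq0$. $(E_0,E_1)$ is a tail if $E_0$ is adjacent to no vertex other than $E_1$ and $E_1$ is adjacent to at most one vertex other than $E_0$. The matrix $Y$ representing $A$ w.r.t. a basis $v_0,\dots,v_d$ satisfies $Av_j=\sum_iY_{ij}v_i$. An eigenvalue $\theta$ of $A$ is normalizing if some basis with $v_i\in E^*_iV$ makes every row sum of the matrix representing $A$ equal to $\theta$; a primitive idempotent is normalizing if its eigenvalue is. *)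

(* End(V) for dim V = n is modelled as 'M[F]_n acting on
   column vectors 'cV[F]_n by left multiplication (A v := A *m v). *)
From HB Require Import structures.
From mathcomp Require Import all_boot all_order all_algebra.
Set Implicit Arguments. Unset Strict Implicit. Unset Printing Implicit Defensive.
Import Order.TTheory GRing.Theory Num.Theory.
Local Open Scope ring_scope.

Section Defs.
Variables (F : fieldType) (n : nat).

Definition orth_idem_system (Es : 'I_n -> 'M[F]_n) : Prop :=
  (forall i j, Es i *m Es j = if i == j then Es i else 0) /\
  (forall i, \rank (Es i) = 1%N).

Definition is_eigenvalue (A : 'M[F]_n) (th : F) : Prop :=
  exists2 v : 'cV[F]_n, v != 0 & A *m v = th *: v.

Definition mult_free_eigs (A : 'M[F]_n) (th : 'I_n -> F) : Prop :=
  injective th /\ forall i, is_eigenvalue A (th i).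

(* E is the primitive idempotent of A for the eigenvalue th i: the projection
   onto the th i-eigenspace along the other eigenspaces (these span V when A
   is multiplicity-free). *)
Definition primitive_idem (A : 'M[F]_n) (th : 'I_n -> F) (i : 'I_n)
    (E : 'M[F]_n) : Prop :=
  forall (j : 'I_n) (v : 'cV[F]_n), A *m v = th j *: v ->
    E *m v = (if i == j then v else 0).

Definition bipartite (Es : 'I_n -> 'M[F]_n) (A : 'M[F]_n) : Prop :=
  forall i, \tr (Es i *m A) = 0.

Definition dual_mx (ths : 'I_n -> F) (Es : 'I_n -> 'M[F]_n) : 'M[F]_n :=
  \sum_i ths i *: Es i.

Definition Delta_adj (E : 'I_n -> 'M[F]_n) (As : 'M[F]_n) (i j : 'I_n) : Prop :=
  i != j /\ E i *m As *m E j != 0.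

Definition is_tail (E : 'I_n -> 'M[F]_n) (As : 'M[F]_n) (i0 i1 : 'I_n) : Prop :=
  (forall k, Delta_adj E As i0 k -> k = i1) /\
  (forall k l, k != i0 -> l != i0 -> Delta_adj E As i1 k -> Delta_adj E As i1 l ->
     k = l).

(* theta is normalizing: there is a basis v_0..v_{n-1} (columns of an
   invertible P) with v_i in E*_i V such that the matrix Y representing A
   (A v_j = sum_i Y_ij v_i, i.e. A P = P Y) has all row sums equal to theta. *)
Definition normalizing (Es : 'I_n -> 'M[F]_n) (A : 'M[F]_n) (th : F) : Prop :=
  exists (P Y : 'M[F]_n),
    [/\ P \in unitmx,
        forall i : 'I_n, exists w : 'cV[F]_n, col i P = Es i *m w,
        A *m P = P *m Y &
        forall i : 'I_n, \sum_(j < n) Y i j = th].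

End Defs.

From HB Require Import structures.
From mathcomp Require Import all_boot all_order all_algebra.
From mathcomp Require Import ring zify.
Set Implicit Arguments. Unset Strict Implicit. Unset Printing Implicit Defensive.
Import Order.TTheory GRing.Theory Num.Theory.
Local Open Scope ring_scope.

(* In the basis v_0, ..., v_d witnessing that E_0 is normalizing, A becomes a
   tridiagonal matrix Y with zero diagonal, nonzero off-diagonal entries and
   constant row sums θ_0, while A* becomes D = diag(θ*_0, ..., θ*_d).  A left
   θ_0-eigenvector ω of Y has no zero entry and diag(ω) symmetrizes Y.  The
   rows ω = ω_0, ω_1 of the inverse eigenbasis of A, moved to this basis, are
   left eigenvectors of Y, and the tail condition says that ω_0 D is killed by
   (Y-θ_0)(Y-θ_1) and ω_1 D by (Y-θ_0)(Y-θ_1)(Y-c).  Through the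
   symmetrization this gives θ* = α + β u for a θ_1-eigenvector u of Y, and
   (Y-c) u² ∈ span(1, u).  Read entrywise, these two relations no longer
   involve the entries of Y once the row sums are used, and they force all
   consecutive pairs (u_{j-1}, u_j) onto one symmetric conic.  Hence
   u_{j-1} + u_{j+1} = B u_j + C, and so
   θ*_j - θ*_{j-3} = (B+1)(θ*_{j-1} - θ*_{j-2}). *)

Section ConicRecurrence.
Variables (F : fieldType) (t0 t1 ka mu la : F).
Hypotheses (t0_neq0 : t0 != 0) (t1_neq0 : t1 != 0) (t01_neq0 : t0 + t1 != 0).

(* If every triple (a, b, c) = (f (j-1), f j, f (j+1)) satisfies [conic_step],
   then all pairs (f (j-1), f j) lie on the symmetric conic [conic x y = 0], whose
   second intersection with the line x = b is (b, conic_next a b) by Vieta. *)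
Definition conic (x y : F) : F :=
  t1 * (x ^+ 2 + y ^+ 2) - (t0 + ka) * x * y - t1 * la / (t0 + t1) * (x + y)
  - t1 * mu / t0.

Definition conic_step (a b c : F) : Prop :=
  t1 * b * (a + c) - t0 * a * c - ka * b ^+ 2 = mu + la * b.

Definition conic_next (a b : F) : F := (t0 + ka) / t1 * b + la / (t0 + t1) - a.

Lemma conic_step_residual (a b : F) :
  t1 * b * (a + conic_next a b) - t0 * a * conic_next a b - ka * b ^+ 2
    - (mu + la * b) = t0 / t1 * conic a b.
Proof. by rewrite /conic_next /conic; field; rewrite t1_neq0 t0_neq0 t01_neq0. Qed.

Lemma conic_next_sym (a b : F) : conic b (conic_next a b) = conic a b.
Proof. by rewrite /conic_next /conic; field; rewrite t1_neq0 t0_neq0 t01_neq0. Qed.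

Lemma conic_stepP (a b c : F) : conic a b = 0 -> conic_step a b c ->
  t0 * a != t1 * b -> c = conic_next a b /\ conic b c = 0.
Proof.
move=> ab0 step ne; suff -> : c = conic_next a b by rewrite conic_next_sym.
have : (t0 * a - t1 * b) * (c - conic_next a b) = 0.
  have := conic_step_residual a b; rewrite ab0 mulr0 -step => e.
  by rewrite -[RHS]e; ring.
by move/eqP; rewrite mulf_eq0 subr_eq0 (negbTE ne) subr_eq0 => /eqP.
Qed.

Lemma conic_start (a b : F) : t0 * b = t1 * a ->
  t0 * b ^+ 2 - ka * a ^+ 2 = mu + la * a -> conic a b = 0.
Proof.
move=> eb emu; rewrite /conic.
have -> : mu = t0 * b ^+ 2 - ka * a ^+ 2 - la * a by rewrite emu; ring.
have -> : b = t1 * a / t0 by rewrite -eb mulrC mulKf.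
by field; rewrite t0_neq0 t01_neq0.
Qed.

Lemma conic_recurrence (d : nat) (f : nat -> F) :
  t0 * f 1%N = t1 * f 0%N ->
  t0 * f 1%N ^+ 2 - ka * f 0%N ^+ 2 = mu + la * f 0%N ->
  (forall j, (0 < j < d)%N -> conic_step (f j.-1) (f j) (f j.+1)) ->
  (forall j, (0 < j < d)%N -> t0 * f j.-1 != t1 * f j) ->
  forall j, (0 < j < d)%N -> f j.+1 = conic_next (f j.-1) (f j).
Proof.
move=> e1 e2 step ne.
suff onconic j : (0 < j < d)%N -> conic (f j.-1) (f j) = 0.
  by move=> j jd; case: (conic_stepP (onconic j jd) (step j jd) (ne j jd)).
elim: j => [//|[_ _|j IH jd]]; first exact: conic_start.
have jd1 : (0 < j.+1 < d)%N by lia.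
by case: (conic_stepP (IH jd1) (step _ jd1) (ne _ jd1)).
Qed.

End ConicRecurrence.

Section TridiagonalEigenRecurrence.
Variables (F : fieldType) (d : nat) (b c f : nat -> F) (t0 t1 ka mu la : F).
Hypotheses (d_ge3 : (3 <= d)%N) (c0 : c 0%N = 0)
  (b_neq0 : forall j, (j < d)%N -> b j != 0)
  (cb_sum : forall j, (j < d)%N -> c j + b j = t0)
  (f_eig : forall j, (j < d)%N -> c j * f j.-1 + b j * f j.+1 = t1 * f j)
  (f_quad : forall j, (j < d)%N ->
     c j * f j.-1 ^+ 2 + b j * f j.+1 ^+ 2 - ka * f j ^+ 2 = mu + la * f j)
  (f_inj : forall i j, (i <= d)%N -> (j <= d)%N -> f i = f j -> i = j).

Let b0 : b 0%N = t0.
Proof. by rewrite -(cb_sum (j:=0%N)) ?c0 ?add0r //; lia. Qed.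

Let f_start : t0 * f 1%N = t1 * f 0%N.
Proof. by rewrite -b0 -(f_eig (j:=0%N)) ?c0 ?mul0r ?add0r //; lia. Qed.

Let f_start_quad : t0 * f 1%N ^+ 2 - ka * f 0%N ^+ 2 = mu + la * f 0%N.
Proof. by rewrite -b0 -(f_quad (j:=0%N)) ?c0 ?mul0r ?add0r //; lia. Qed.

Let f_step j : (j < d)%N ->
  conic_step t0 t1 ka mu la (f j.-1) (f j) (f j.+1).
Proof.
move=> jd; rewrite /conic_step -(f_quad jd) -(cb_sum jd).
have -> : t1 * f j = (c j + b j) * f j.-1 + b j * (f j.+1 - f j.-1).
  by rewrite -(f_eig jd); ring.
ring.
Qed.

Let f_nondeg j : (0 < j < d)%N -> t0 * f j.-1 != t1 * f j.
Proof.
move=> jd; rewrite -subr_eq0.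
have -> : t0 * f j.-1 - t1 * f j = b j * (f j.-1 - f j.+1).
  by rewrite -(cb_sum (j:=j)) -?f_eig; [ring | lia | lia].
rewrite mulf_neq0 ?b_neq0 ?subr_eq0 //; first lia.
by apply/eqP => /f_inj; lia.
Qed.

Lemma tridiag_eigen_recurrence : exists B C : F,
  forall j, (0 < j < d)%N -> f j.-1 + f j.+1 = B * f j + C.
Proof.
have t0_neq0 : t0 != 0 by rewrite -b0 b_neq0 //; lia.
have t1_neq0 : t1 != 0.
  apply: contra (f_nondeg (j:=2%N) ltac:(lia)) => /eqP t1_0.
  have /eqP : t0 * f 1%N = 0 by rewrite f_start t1_0 mul0r.
  by rewrite mulf_eq0 (negbTE t0_neq0) => /eqP /= ->; rewrite t1_0 mulr0 mul0r.
have t01_neq0 : t0 + t1 != 0.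
  apply: contra (f_nondeg (j:=1%N) ltac:(lia)) => /eqP t01_0.
  have t1E : t1 = - t0 by apply/eqP; rewrite -addr_eq0 addrC t01_0.
  have /eqP : t0 * (f 1%N + f 0%N) = 0 by rewrite mulrDr f_start t1E; ring.
  by rewrite mulf_eq0 (negbTE t0_neq0) addr_eq0 => /eqP /= ->; rewrite t1E; apply/eqP; ring.
exists ((t0 + ka) / t1), (la / (t0 + t1)) => j jd.
rewrite (conic_recurrence t0_neq0 t1_neq0 t01_neq0 f_start f_start_quad _ f_nondeg) //.
  by rewrite /conic_next; ring.
by move=> k kd; apply: f_step; lia.
Qed.

End TridiagonalEigenRecurrence.

Lemma three_term_recurrence_gap (F : fieldType) (d : nat) (f : nat -> F) (B C : F) :
  (forall j, (0 < j < d)%N -> f j.-1 + f j.+1 = B * f j + C) ->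
  forall j, (3 <= j <= d)%N -> f j - f (j - 3)%N = (B + 1) * (f j.-1 - f (j - 2)%N).
Proof.
move=> rec j jd; have [m jm] : exists m, j = m.+3 by exists (j - 3)%N; lia.
rewrite jm /= !subSS subn0 in jd *.
have e1 := rec m.+1 ltac:(lia); have e2 := rec m.+2 ltac:(lia).
have -> : f m.+3 = B * f m.+2 + C - f m.+1 by rewrite -e2 addrC addKr.
have -> : f m = B * f m.+1 + C - f m.+2 by rewrite -e1 addrK.
ring.
Qed.

Lemma prod_sub_eq0 (F : fieldType) (t : F) (s : seq F) :
  t \in s -> \prod_(a <- s) (t - a) = 0.
Proof.
by move=> ts; apply/eqP; rewrite prodf_seq_eq0; apply/hasP; exists t; rewrite // subrr eqxx.
Qed.

Section ShiftProducts.
Variables (F : fieldType) (n : nat) (B : 'M[F]_n).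

Lemma shift_comm (a b : F) : GRing.comm (B - a%:M) (B - b%:M).
Proof.
have cS (x : F) (M : 'M[F]_n) : GRing.comm x%:M M by exact: comm_scalar_mx.
apply: commrB; apply: commr_sym; last exact: cS.
by apply: commrB; [exact: commr_refl | apply: commr_sym; exact: cS].
Qed.

Lemma shift_prod_comm (a : F) (s : seq F) :
  GRing.comm (B - a%:M) (\prod_(b <- s) (B - b%:M)).
Proof. by apply: commr_prod => b _; exact: shift_comm. Qed.

Lemma shift_mulmx_eq0 (v : 'cV[F]_n) (t : F) :
  ((B - t%:M) *m v == 0) = (B *m v == t *: v).
Proof. by rewrite mulmxBl mul_scalar_mx subr_eq0. Qed.

Lemma shift_prod_mulmx_eig (v : 'cV[F]_n) (t : F) (s : seq F) :
  B *m v = t *: v -> \prod_(a <- s) (B - a%:M) *m v = \prod_(a <- s) (t - a) *: v.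
Proof.
move=> Bv; elim: s => [|a s IH]; first by rewrite !big_nil mul1mx scale1r.
rewrite !big_cons -mulmxE -mulmxA IH -scalemxAr mulmxBl Bv mul_scalar_mx.
by rewrite -scalerBl scalerA mulrC.
Qed.

Lemma mulmx_shift_prod_eig (w : 'rV[F]_n) (t : F) (s : seq F) :
  w *m B = t *: w -> w *m \prod_(a <- s) (B - a%:M) = \prod_(a <- s) (t - a) *: w.
Proof.
move=> wB; elim: s => [|a s IH]; first by rewrite !big_nil mulmx1 scale1r.
rewrite !big_cons -mulmxE mulmxA mulmxBr wB mul_mx_scalar -scalerBl.
by rewrite -scalemxAl IH scalerA.
Qed.

Lemma shift_prod_mulmx_eig_eq0 (v : 'cV[F]_n) (t : F) (s : seq F) :
  B *m v = t *: v -> t \in s -> \prod_(a <- s) (B - a%:M) *m v = 0.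
Proof.
by move=> Bv ts; rewrite (shift_prod_mulmx_eig _ Bv) prod_sub_eq0 ?scale0r.
Qed.

End ShiftProducts.

Lemma mul_row_diagC (F : fieldType) (n : nat) (u v : 'rV[F]_n) :
  u *m diag_mx v = v *m diag_mx u.
Proof. by apply/rowP => j; rewrite !mul_mx_diag !mxE mulrC. Qed.

Lemma mul_diag_eq0 (F : fieldType) (n : nat) (g w : 'rV[F]_n) :
  (forall k, w 0 k != 0) -> g *m diag_mx w = 0 -> g = 0.
Proof.
move=> w_neq0 /rowP gw0; apply/rowP => k; have := gw0 k.
by rewrite mul_mx_diag !mxE => /eqP; rewrite mulf_eq0 (negbTE (w_neq0 k)) orbF => /eqP.
Qed.

Section HollowTridiagonal.
Variables (F : fieldType) (d : nat).
Local Notation n := d.+1.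

Definition hollow_tridiagonal (Y : 'M[F]_n) : Prop :=
  forall i j : 'I_n, i.+1 != j -> j.+1 != i -> Y i j = 0.

Definition sub_entry (Y : 'M[F]_n) (j : nat) : F :=
  if (0 < j)%N then Y (inord j) (inord j.-1) else 0.

Definition super_entry (Y : 'M[F]_n) (j : nat) : F :=
  if (j < d)%N then Y (inord j) (inord j.+1) else 0.

Lemma sum_neighbours (f : 'I_n -> F) (j : nat) : (j <= d)%N ->
  (forall i : 'I_n, i.+1 != j -> (i : nat) != j.+1 -> f i = 0) ->
  \sum_i f i = (if (0 < j)%N then f (inord j.-1) else 0) +
               (if (j < d)%N then f (inord j.+1) else 0).
Proof.
move=> jd f0.
rewrite (eq_bigr (fun i : 'I_n => (if i.+1 == j then f i else 0) +
                                  (if (i : nat) == j.+1 then f i else 0))).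
  rewrite big_split /=; congr (_ + _).
    case: ifP => j0; last by rewrite big1 // => i _; case: eqP => //; lia.
    rewrite (bigD1 (inord j.-1)) //= inordK ?prednK ?eqxx //; last by lia.
    rewrite big1 ?addr0 // => i /eqP ij; case: eqP => // ij'.
    by case: ij; apply: val_inj; rewrite /= inordK; lia.
  case: ifP => jd'; last by rewrite big1 // => i _; case: eqP => //; have := ltn_ord i; lia.
  rewrite (bigD1 (inord j.+1)) //= inordK ?eqxx //.
  rewrite big1 ?addr0 // => i /eqP ij; case: eqP => // ij'.
  by case: ij; apply: val_inj; rewrite /= inordK; lia.
move=> i _; case: eqP => [e1|/eqP n1]; case: eqP => [e2|/eqP n2]; try lia.
- by rewrite addr0.
- by rewrite add0r.
- by rewrite addr0 f0.
Qed.

Lemma super_entry_tr (Y : 'M[F]_n) (j : nat) : (j < d)%N ->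
  super_entry Y^T j = Y (inord j.+1) (inord j).
Proof. by move=> jd; rewrite /super_entry jd mxE. Qed.

Variable Y : 'M[F]_n.
Hypothesis Y_hollow : hollow_tridiagonal Y.

Lemma mulmx_hollow_col (z : 'cV[F]_n) (j : nat) : (j <= d)%N ->
  (Y *m z) (inord j) 0 =
    sub_entry Y j * z (inord j.-1) 0 + super_entry Y j * z (inord j.+1) 0.
Proof.
move=> jd; rewrite mxE (sum_neighbours jd) => [|i ij ji]; last first.
  by rewrite Y_hollow ?mul0r // inordK //; lia.
by rewrite /sub_entry /super_entry; case: ifP; case: ifP; rewrite ?mul0r ?add0r ?addr0.
Qed.

Lemma sum_row_hollow (j : nat) : (j <= d)%N ->
  \sum_k Y (inord j) k = sub_entry Y j + super_entry Y j.
Proof.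
move=> jd; have := mulmx_hollow_col (const_mx 1) jd; rewrite !mxE !mulr1 => <-.
by apply: eq_bigr => k _; rewrite mxE mulr1.
Qed.

End HollowTridiagonal.

Lemma hollow_tridiagonal_tr (F : fieldType) (d : nat) (Y : 'M[F]_d.+1) :
  hollow_tridiagonal Y -> hollow_tridiagonal Y^T.
Proof. by move=> Y_hollow i j ij ji; rewrite mxE Y_hollow. Qed.

Lemma mulmx_hollow_row (F : fieldType) (d : nat) (Y : 'M[F]_d.+1)
    (g : 'rV[F]_d.+1) (j : nat) : hollow_tridiagonal Y -> (j <= d)%N ->
  (g *m Y) 0 (inord j) =
    sub_entry Y^T j * g 0 (inord j.-1) + super_entry Y^T j * g 0 (inord j.+1).
Proof.
move=> Y_hollow jd; rewrite -[g *m Y]trmxK trmx_mul mxE.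
by rewrite (mulmx_hollow_col (hollow_tridiagonal_tr Y_hollow)) // !mxE.
Qed.

Section NormalizedHollowTridiagonal.
Variables (F : fieldType) (d : nat) (Y : 'M[F]_d.+1) (t0 : F).
Local Notation n := d.+1.
Local Notation ones := (const_mx 1 : 'cV[F]_n).
Hypotheses (Y_hollow : hollow_tridiagonal Y)
  (Y_adj_neq0 : forall j, (j < d)%N ->
     Y (inord j) (inord j.+1) != 0 /\ Y (inord j.+1) (inord j) != 0)
  (Y_rowsum : forall i, \sum_j Y i j = t0).

Lemma sub_super_entry_sum (j : nat) : (j <= d)%N -> sub_entry Y j + super_entry Y j = t0.
Proof. by move=> jd; rewrite -sum_row_hollow // Y_rowsum. Qed.

Lemma super_entry_neq0 (j : nat) : (j < d)%N -> super_entry Y j != 0.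
Proof. by move=> jd; rewrite /super_entry jd (Y_adj_neq0 jd).1. Qed.

Lemma mulmx_ones : Y *m ones = t0 *: ones.
Proof.
apply/colP => k; rewrite !mxE mulr1 -(Y_rowsum k).
by apply: eq_bigr => j _; rewrite mxE mulr1.
Qed.

Lemma right_eig_eq0 (z : 'cV[F]_n) (a : F) :
  Y *m z = a *: z -> z (inord 0) 0 = 0 -> z = 0.
Proof.
move=> zE z0.
suff zj j : (j <= d)%N -> z (inord j.-1) 0 = 0 /\ z (inord j) 0 = 0.
  by apply/colP => k; rewrite mxE -(inord_val k); case: (zj k (leq_ord k)).
elim: j => [|j IH] jd; first by rewrite z0.
have [zp zc] := IH (ltnW jd); split => //.
have := mulmx_hollow_col Y_hollow z (ltnW jd).
rewrite zE mxE zc zp !mulr0 add0r => /esym /eqP.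
by rewrite mulf_eq0 (negbTE (super_entry_neq0 jd)) => /eqP.
Qed.

Lemma right_eig_propto (z w : 'cV[F]_n) (a : F) :
  Y *m z = a *: z -> Y *m w = a *: w -> w (inord 0) 0 != 0 ->
  z = (z (inord 0) 0 / w (inord 0) 0) *: w.
Proof.
move=> zE wE w0; apply/eqP; rewrite -subr_eq0; apply/eqP; apply: (right_eig_eq0 (a := a)).
  by rewrite mulmxBr zE -scalemxAr wE scalerBr !scalerA [_ * a]mulrC.
by rewrite !mxE divfK // subrr.
Qed.

Lemma left_eig_balance (om : 'rV[F]_n) : om *m Y = t0 *: om ->
  forall j, (j < d)%N ->
    om 0 (inord j) * Y (inord j) (inord j.+1) = om 0 (inord j.+1) * Y (inord j.+1) (inord j).
Proof.
move=> omE; elim=> [|j IH] jd.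
  have := mulmx_hollow_row om Y_hollow (leq0n d).
  rewrite omE mxE -(sub_super_entry_sum (leq0n d)) super_entry_tr //.
  rewrite /sub_entry /super_entry /= jd add0r mul0r add0r => e.
  by rewrite mulrC e mulrC.
have := mulmx_hollow_row om Y_hollow (ltnW jd).
rewrite omE mxE -(sub_super_entry_sum (ltnW jd)) super_entry_tr //.
rewrite /sub_entry /super_entry /= jd mxE [Y _ _ * _]mulrC IH; last lia.
move=> e; apply: (addrI (om 0 (inord j.+1) * Y (inord j.+1) (inord j))).
by rewrite -mulrDr mulrC e [Y _ _ * _]mulrC.
Qed.

Section LeftEigenvector.
Variable om : 'rV[F]_n.
Hypotheses (omE : om *m Y = t0 *: om) (om_neq0 : om != 0).

Lemma left_eig_entry_neq0 (k : 'I_n) : om 0 k != 0.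
Proof.
have step j : (j < d)%N -> (om 0 (inord j) == 0) = (om 0 (inord j.+1) == 0).
  move=> jd; have [Y01 Y10] := Y_adj_neq0 jd; have := left_eig_balance omE jd.
  move=> e; apply/idP/idP => /eqP om0; move: e; rewrite om0 mul0r.
    by move/esym/eqP; rewrite mulf_eq0 (negbTE Y10) orbF.
  by move/eqP; rewrite mulf_eq0 (negbTE Y01) orbF.
have all0 j : (j <= d)%N -> (om 0 (inord j) == 0) = (om 0 (inord 0) == 0).
  by elim: j => [//|j IH] jd; rewrite -step // IH // ltnW.
apply: contra om_neq0 => omk0; apply/eqP/rowP => i.
have om00 : om 0 (inord 0) == 0 by rewrite -(all0 k) ?inord_val // -ltnS.
by rewrite mxE -(inord_val i); apply/eqP; rewrite all0 // -ltnS.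
Qed.

Lemma diag_left_eig_sym : diag_mx om *m Y = Y^T *m diag_mx om.
Proof.
have adj (i j : 'I_n) : i.+1 = j -> om 0 i * Y i j = Y j i * om 0 j.
  move=> ij; have jd : (i < d)%N by rewrite -ltnS ij.
  have := left_eig_balance omE jd; rewrite ij !inord_val => ->; exact: mulrC.
apply/matrixP => i j; rewrite mul_diag_mx mul_mx_diag !mxE.
have [ij|ij] := eqVneq i.+1 (j : nat); first exact: adj.
have [ji|ji] := eqVneq j.+1 (i : nat); first by rewrite mulrC -(adj j i) // mulrC.
by rewrite !Y_hollow ?mulr0 ?mul0r.
Qed.

Lemma diag_left_eig_shift_prod (s : seq F) :
  diag_mx om *m \prod_(a <- s) (Y - a%:M) = (\prod_(a <- s) (Y - a%:M))^T *m diag_mx om.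
Proof.
elim: s => [|a s IH]; first by rewrite !big_nil trmx1 mulmx1 mul1mx.
have trB : Y^T - a%:M = (Y - a%:M)^T by rewrite linearB /= tr_scalar_mx.
rewrite big_cons -mulmxE mulmxA mulmxBr diag_left_eig_sym mul_mx_scalar.
rewrite -mul_scalar_mx -mulmxBl trB -mulmxA IH mulmxA -trmx_mul.
by rewrite mulmxE -(shift_prod_comm Y a s).
Qed.

Lemma left_eig_annihilator (g : 'rV[F]_n) (s : seq F) :
  g *m diag_mx om *m \prod_(a <- s) (Y - a%:M) = 0 ->
  \prod_(a <- s) (Y - a%:M) *m g^T = 0.
Proof.
rewrite -mulmxA diag_left_eig_shift_prod mulmxA -[g]trmxK -trmx_mul trmxK.
by move/(mul_diag_eq0 left_eig_entry_neq0)/eqP; rewrite trmx_eq0 => /eqP.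
Qed.

Lemma left_eig_ratio (om1 : 'rV[F]_n) (t1 : F) : om1 *m Y = t1 *: om1 ->
  exists2 z : 'cV[F]_n, Y *m z = t1 *: z & om1 = z^T *m diag_mx om.
Proof.
move=> om1E; set z := \col_j (om1 0 j / om 0 j).
have om1z : om1 = z^T *m diag_mx om.
  by apply/rowP => k; rewrite mul_mx_diag !mxE divfK // left_eig_entry_neq0.
exists z => //; apply/eqP; rewrite -subr_eq0 -trmx_eq0; apply/eqP.
apply: (mul_diag_eq0 left_eig_entry_neq0).
rewrite linearB /= mulmxBl trmx_mul -mulmxA -diag_left_eig_sym mulmxA -om1z.
by rewrite om1E linearZ /= -scalemxAl -om1z subrr.
Qed.

End LeftEigenvector.

Lemma shift2_kernel_shift (t1 : F) (z : 'cV[F]_n) :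
  \prod_(a <- [:: t0; t1]) (Y - a%:M) *m z = 0 ->
  Y *m ((Y - t0%:M) *m z) = t1 *: ((Y - t0%:M) *m z).
Proof.
rewrite !big_cons big_nil mulr1 shift_comm -mulmxE -mulmxA => /eqP.
by rewrite shift_mulmx_eq0 => /eqP.
Qed.

Lemma shift2_kernel (t1 : F) (u z : 'cV[F]_n) :
  t0 != t1 -> Y *m u = t1 *: u -> u (inord 0) 0 != 0 ->
  \prod_(a <- [:: t0; t1]) (Y - a%:M) *m z = 0 ->
  exists a b : F, z = a *: ones + b *: u.
Proof.
move=> t01 uE u0 /shift2_kernel_shift rE.
have t10 : t1 - t0 != 0 by rewrite subr_eq0 eq_sym.
have {}rE := right_eig_propto rE uE u0; set la := _ / _ in rE.
set q := z - (la / (t1 - t0)) *: u.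
have qE : Y *m q = t0 *: q.
  apply/eqP; rewrite -shift_mulmx_eq0 mulmxBr rE -scalemxAr mulmxBl mul_scalar_mx.
  by rewrite uE -scalerBl scalerA divfK // subrr.
have := right_eig_propto qE mulmx_ones; rewrite mxE oner_neq0 divr1 => /(_ isT) qones.
by exists (q (inord 0) 0), (la / (t1 - t0)); rewrite -qones subrK.
Qed.

Lemma nonconstant_shift2_kernel (t1 : F) (z : 'cV[F]_n) :
  t0 != t1 -> z (inord 0) 0 != z (inord 1) 0 ->
  \prod_(a <- [:: t0; t1]) (Y - a%:M) *m z = 0 ->
  exists u a b, [/\ Y *m u = t1 *: u, u (inord 0) 0 != 0, b != 0 &
                    z = a *: ones + b *: u].
Proof.
move=> t01 z01 zker; have uE := shift2_kernel_shift zker.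
set u := (Y - t0%:M) *m z in uE.
have const (a : F) : z = a *: ones -> z (inord 0) 0 = z (inord 1) 0 by move->; rewrite !mxE.
have u0 : u (inord 0) 0 != 0.
  apply: contra z01 => /eqP /(right_eig_eq0 uE) /eqP; rewrite shift_mulmx_eq0 => /eqP zE.
  have := right_eig_propto zE mulmx_ones; rewrite mxE oner_neq0.
  by move=> /(_ isT) /const ->.
have [a [b zab]] := shift2_kernel t01 uE u0 zker.
exists u, a, b; split=> //; apply: contra z01 => /eqP b0.
by apply/eqP/(const a); rewrite zab b0 scale0r addr0.
Qed.

Local Notation sq u := (map_mx (fun a : F => a ^+ 2) u).

Lemma shift_prod_mulmx_sq_eq0 (om om1 x : 'rV[F]_n) (u : 'cV[F]_n)
    (t1 a b : F) (s : seq F) :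
  om *m Y = t0 *: om -> om != 0 -> om1 *m Y = t1 *: om1 -> om1 != 0 ->
  Y *m u = t1 *: u -> u (inord 0) 0 != 0 -> b != 0 -> x^T = a *: ones + b *: u ->
  t1 \in s -> om1 *m diag_mx x *m \prod_(c <- s) (Y - c%:M) = 0 ->
  \prod_(c <- s) (Y - c%:M) *m sq u = 0.
Proof.
move=> omE om_neq0 om1E om1_neq0 uE u0 b0 xE t1s.
have [z zE om1z] := left_eig_ratio omE om_neq0 om1E.
have [k zu] : exists k, z = k *: u by eexists; exact: right_eig_propto zE uE u0.
have k0 : k != 0.
  by apply: contra om1_neq0 => /eqP k0; rewrite om1z zu k0 scale0r trmx0 mul0mx.
set g := \row_j (z j 0 * x 0 j).
have -> : om1 *m diag_mx x = g *m diag_mx om.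
  by apply/rowP => j; rewrite om1z !mul_mx_diag !mxE mulrAC.
move/(left_eig_annihilator omE om_neq0).
have -> : g^T = (k * a) *: u + (k * b) *: sq u.
  apply/colP => j; have := congr1 (fun v : 'cV[F]_n => v j 0) xE.
  by rewrite /g zu !mxE => ->; ring.
rewrite mulmxDr -!scalemxAr (shift_prod_mulmx_eig_eq0 uE t1s) scaler0 add0r => /eqP.
by rewrite scaler_eq0 mulf_eq0 (negbTE k0) (negbTE b0) => /eqP.
Qed.

Lemma sq_eigvec_relation (t1 c : F) (u : 'cV[F]_n) :
  t0 != t1 -> Y *m u = t1 *: u -> u (inord 0) 0 != 0 ->
  \prod_(a <- [:: t0; t1; c]) (Y - a%:M) *m sq u = 0 ->
  exists mu la : F, Y *m sq u - c *: sq u = mu *: ones + la *: u.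
Proof.
move=> t01 uE u0; rewrite [X in X *m _](_ : _ = \prod_(a <- [:: t0; t1]) (Y - a%:M) * (Y - c%:M)).
  by rewrite -mulmxE -mulmxA => /(shift2_kernel t01 uE u0); rewrite mulmxBl mul_scalar_mx.
by rewrite !big_cons !big_nil !mulr1 mulrA.
Qed.

Lemma eigvec_three_term_recurrence (t1 c mu la : F) (u : 'cV[F]_n) : (3 <= d)%N ->
  Y *m u = t1 *: u -> Y *m sq u - c *: sq u = mu *: ones + la *: u ->
  (forall i j : 'I_n, u i 0 = u j 0 -> i = j) ->
  exists B C : F, forall j, (0 < j < d)%N ->
    u (inord j.-1) 0 + u (inord j.+1) 0 = B * u (inord j) 0 + C.
Proof.
move=> d3 uE sqE u_inj.
apply: (tridiag_eigen_recurrence (b := super_entry Y) (c := sub_entry Y) (t0 := t0)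
  (t1 := t1) (ka := c) (mu := mu) (la := la) d3) => // [j jd|j jd|j jd|j jd|i j id jd].
- exact: super_entry_neq0.
- exact/sub_super_entry_sum/ltnW.
- by rewrite -(mulmx_hollow_col Y_hollow u (ltnW jd)) uE mxE.
- have : Y *m sq u = c *: sq u + (mu *: ones + la *: u) by rewrite -sqE addrC subrK.
  move/(congr1 (fun v : 'cV[F]_n => v (inord j) 0)).
  by rewrite (mulmx_hollow_col Y_hollow _ (ltnW jd)) !mxE mulr1 => ->; rewrite addrAC subrr add0r.
by move/u_inj/(congr1 val); rewrite /= !inordK.
Qed.

Lemma hollow_tridiagonal_dual_recurrence (x : 'I_n -> F) (om om1 : 'rV[F]_n) (t1 c : F) :
  (3 <= d)%N -> injective x -> t0 != t1 ->
  om *m Y = t0 *: om -> om != 0 -> om1 *m Y = t1 *: om1 -> om1 != 0 ->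
  om *m diag_mx (\row_i x i) *m \prod_(a <- [:: t0; t1]) (Y - a%:M) = 0 ->
  om1 *m diag_mx (\row_i x i) *m \prod_(a <- [:: t0; t1; c]) (Y - a%:M) = 0 ->
  exists K : F, forall j, (3 <= j <= d)%N ->
    x (inord j) - x (inord (j - 3)) = K * (x (inord j.-1) - x (inord (j - 2))).
Proof.
move=> d3 x_inj t01 omE om_neq0 om1E om1_neq0 H1 H2; set xr := \row_i x i in H1 H2.
have x01 : xr^T (inord 0) 0 != xr^T (inord 1) 0.
  by apply/eqP; rewrite !mxE => /x_inj/(congr1 val); rewrite /= !inordK //; lia.
have xker : \prod_(a <- [:: t0; t1]) (Y - a%:M) *m xr^T = 0.
  by apply: (left_eig_annihilator omE om_neq0); rewrite -mul_row_diagC.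
have [u [a [b [uE u0 b0 xE]]]] := nonconstant_shift2_kernel t01 x01 xker.
have xu j : x j = a + b * u j 0.
  by have := congr1 (fun v : 'cV[F]_n => v j 0) xE; rewrite !mxE mulr1.
have t1s : t1 \in [:: t0; t1; c] by rewrite !inE eqxx orbT.
have usq := shift_prod_mulmx_sq_eq0 omE om_neq0 om1E om1_neq0 uE u0 b0 xE t1s H2.
have [mu [la sqE]] := sq_eigvec_relation t01 uE u0 usq.
have u_inj (i j : 'I_n) : u i 0 = u j 0 -> i = j.
  by move=> uij; apply: x_inj; rewrite !xu uij.
have [B [C rec]] := eigvec_three_term_recurrence d3 uE sqE u_inj.
exists (B + 1) => j jd; rewrite !xu.
have /= e := three_term_recurrence_gap rec jd.
transitivity (b * (u (inord j) 0 - u (inord (j - 3)) 0)); first by ring.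
by rewrite e; ring.
Qed.

End NormalizedHollowTridiagonal.

Section IdempotentBases.
Variables (F : fieldType) (n : nat).

Lemma delta_sandwich (Z : 'M[F]_n) (i j : 'I_n) :
  delta_mx i i *m Z *m delta_mx j j = Z i j *: delta_mx i j.
Proof.
rewrite -(mul_delta_mx (0 : 'I_1) i i) -(mul_delta_mx (0 : 'I_1) j j).
rewrite !mulmxA -(mulmxA _ (delta_mx 0 i)) -rowE -(mulmxA _ (row i Z)) -colE.
by rewrite [col j (row i Z)]mx11_scalar !mxE mul_mx_scalar -scalemxAl mul_delta_mx.
Qed.

Lemma mxtrace_delta_mul (Z : 'M[F]_n) (i : 'I_n) : \tr (delta_mx i i *m Z) = Z i i.
Proof.
rewrite -(mul_delta_mx (0 : 'I_1) i i) -mulmxA -rowE mxtrace_mulC -colE.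
by rewrite /mxtrace big_ord1 !mxE.
Qed.

Variable P : 'M[F]_n.
Hypothesis P_unit : P \in unitmx.

Lemma conj_delta_neq0 (i j : 'I_n) : P *m delta_mx i j *m invmx P != 0.
Proof.
apply/eqP => /(congr1 (fun M => invmx P *m M *m P)).
rewrite !mulmxA mulVmx // mul1mx mulmxKV // mulmx0 mul0mx => /matrixP/(_ i j).
by rewrite !mxE !eqxx => /eqP; rewrite oner_eq0.
Qed.

Lemma conj_delta_sandwich (X : 'M[F]_n) (i j : 'I_n) :
  (P *m delta_mx i i *m invmx P) *m X *m (P *m delta_mx j j *m invmx P) =
    (invmx P *m X *m P) i j *: (P *m delta_mx i j *m invmx P).
Proof.
transitivity (P *m (delta_mx i i *m (invmx P *m X *m P) *m delta_mx j j) *m invmx P).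
  by rewrite !mulmxA.
by rewrite delta_sandwich -scalemxAr -scalemxAl.
Qed.

Lemma conj_delta_sandwich_eq0 (X : 'M[F]_n) (i j : 'I_n) :
  ((P *m delta_mx i i *m invmx P) *m X *m (P *m delta_mx j j *m invmx P) == 0) =
    ((invmx P *m X *m P) i j == 0).
Proof. by rewrite conj_delta_sandwich scaler_eq0 (negbTE (conj_delta_neq0 i j)) orbF. Qed.

Lemma conj_delta_of_cols (Q : 'M[F]_n) (i : 'I_n) :
  (forall k, Q *m col k P = if i == k then col k P else 0) ->
  Q = P *m delta_mx i i *m invmx P.
Proof.
move=> QP; apply: (canRL (mulmxK P_unit)); apply/matrixP => r k.
have cE (N : 'M[F]_n) : N r k = col k N r 0 by rewrite mxE.
rewrite cE [RHS]cE !colE -!mulmxA -(colE k P) QP.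
case: (eqVneq i k) => [->|ik]; first by rewrite mul_delta_mx -colE.
by rewrite mul_delta_mx_0 // mulmx0.
Qed.

End IdempotentBases.

Lemma primitive_idem_diag (F : fieldType) (n : nat) (A : 'M[F]_n)
    (th : 'I_n -> F) (E : 'I_n -> 'M[F]_n) :
  mult_free_eigs A th -> (forall i, primitive_idem A th i (E i)) ->
  exists V : 'M[F]_n, [/\ V \in unitmx, A *m V = V *m diag_mx (\row_k th k) &
     forall i, E i = V *m delta_mx i i *m invmx V].
Proof.
case=> _ th_eig E_prim.
have [v vE] : exists v : 'I_n -> 'cV[F]_n, forall k, v k != 0 /\ A *m v k = th k *: v k.
  apply: (@fin_all_exists _ (fun _ => 'cV[F]_n)
    (fun k v => v != 0 /\ A *m v = th k *: v)) => k.
  by have [v v0 vE] := th_eig k; exists v.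
set V := \matrix_(i, k) v k i 0.
have colV k : col k V = v k by apply/colP => i; rewrite !mxE.
have V_unit : V \in unitmx.
  rewrite unitmxE unitfE -det_tr; apply/det0P => -[c c_neq0 cV].
  have [k ck] : exists k, c 0 k != 0.
    apply/existsP; apply: contraR c_neq0 => /existsPn c0.
    by apply/eqP/rowP => k; rewrite mxE; apply/eqP/negbNE/c0.
  have Vc : V *m c^T = \sum_l c 0 l *: v l.
    by apply/colP => r; rewrite !mxE summxE; apply: eq_bigr => l _; rewrite !mxE mulrC.
  have : E k *m (V *m c^T) = 0 by rewrite -[V *m c^T]trmxK trmx_mul trmxK cV trmx0 mulmx0.
  rewrite Vc mulmx_sumr (bigD1 k) //= big1 => [|l lk]; last first.
    by rewrite -scalemxAr (E_prim k l _ (vE l).2) eq_sym (negbTE lk) scaler0.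
  rewrite addr0 -scalemxAr (E_prim k k _ (vE k).2) eqxx => /eqP.
  by rewrite scaler_eq0 (negbTE ck) (negbTE (vE k).1).
exists V; split=> // [|i].
  apply/matrixP => r k; rewrite mul_mx_diag !mxE mulrC.
  have := congr1 (fun c : 'cV[F]_n => c r 0) (vE k).2; rewrite !mxE => <-.
  by apply: eq_bigr => l _; rewrite /V mxE.
by apply: conj_delta_of_cols => // k; rewrite colV (E_prim i k) ?(vE k).2.
Qed.

Lemma normalizing_hollow_tridiagonal (F : fieldType) (d : nat)
    (Es : 'I_d.+1 -> 'M[F]_d.+1) (A : 'M[F]_d.+1) (ths : 'I_d.+1 -> F) (t : F) :
  orth_idem_system Es ->
  (forall i j : 'I_d.+1, (1 < `|(i : int) - (j : int)|)%N -> Es i *m A *m Es j = 0) ->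
  (forall i j : 'I_d.+1, `|(i : int) - (j : int)|%N = 1%N -> Es i *m A *m Es j != 0) ->
  bipartite Es A -> normalizing Es A t ->
  exists P Y : 'M[F]_d.+1,
    [/\ P \in unitmx, A *m P = P *m Y,
        invmx P *m dual_mx ths Es *m P = diag_mx (\row_i ths i) &
        [/\ hollow_tridiagonal Y,
             forall j, (j < d)%N ->
               Y (inord j) (inord j.+1) != 0 /\ Y (inord j.+1) (inord j) != 0
           & forall i, \sum_j Y i j = t]].
Proof.
case=> orth _ far near bip [P [Y [Pu Pcol APY Ysum]]].
have EsP i : Es i = P *m delta_mx i i *m invmx P.
  apply: conj_delta_of_cols => // k; have [w ->] := Pcol k.
  by rewrite mulmxA orth; case: eqP => [->|_]; rewrite ?mul0mx.
have YE : Y = invmx P *m A *m P by rewrite -mulmxA APY mulKmx.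
have Y_eq0 i j : (Es i *m A *m Es j == 0) = (Y i j == 0).
  by rewrite !EsP conj_delta_sandwich_eq0 // -YE.
exists P, Y; split=> //.
  rewrite /dual_mx mulmx_sumr mulmx_suml diag_mx_sum_delta; apply: eq_bigr => i _.
  by rewrite EsP -scalemxAr -scalemxAl !mulmxA mulVmx // mul1mx mulmxKV // mxE.
split=> // [i j ij ji|j jd].
- have [<-|neq] := eqVneq i j.
    rewrite -(bip i) EsP -!mulmxA mxtrace_mulC -mulmxA.
    by rewrite [invmx P *m _ *m _](_ : _ = Y) ?mxtrace_delta_mul // YE mulmxA.
  have {}neq : (i : nat) != j by [].
  by apply/eqP; rewrite -Y_eq0 far //; lia.
- by split; rewrite -Y_eq0; apply: near; rewrite !inordK //; lia.
Qed.

Section Tail.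
Variables (F : fieldType) (n : nat) (E : 'I_n -> 'M[F]_n) (As : 'M[F]_n)
  (th : 'I_n -> F) (i0 i1 : 'I_n).
Hypothesis tail : is_tail E As i0 i1.

Lemma tail_first_row_support (k : 'I_n) :
  E i0 *m As *m E k != 0 -> th k \in [:: th i0; th i1].
Proof.
move=> adj; have [->|k0] := eqVneq k i0; first exact: mem_head.
by rewrite (tail.1 k) ?inE ?eqxx ?orbT //; split; rewrite // eq_sym.
Qed.

Lemma tail_second_row_support : exists c : F, forall k : 'I_n,
  E i1 *m As *m E k != 0 -> th k \in [:: th i0; th i1; c].
Proof.
pose far k := [&& k != i0, k != i1 & E i1 *m As *m E k != 0].
have near k : E i1 *m As *m E k != 0 -> ~~ far k -> th k \in [:: th i0; th i1].
  by move=> adj; rewrite /far adj andbT negb_and !negbK => /orP[] /eqP ->;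
    rewrite !inE eqxx ?orbT.
case: (pickP far) => [k1 /and3P [k10 k11 adj1] | nofar].
  exists (th k1) => k adj; have [fark|/(near k adj)] := boolP (far k); last first.
    by rewrite !inE => /orP[] ->; rewrite ?orbT.
  case/and3P: fark => k0 kk1 adjk.
  by rewrite (tail.2 k k1) ?inE ?eqxx ?orbT //; split; rewrite // eq_sym.
exists 0 => k adj; have := near k adj; rewrite nofar => /(_ isT).
by rewrite !inE => /orP[] ->; rewrite ?orbT.
Qed.

End Tail.

Lemma row_left_eig (F : fieldType) (n : nat) (Om Y : 'M[F]_n) (th : 'I_n -> F)
    (k : 'I_n) :
  Om *m Y = diag_mx (\row_k th k) *m Om -> row k Om *m Y = th k *: row k Om.
Proof. by move=> OmY; rewrite -row_mul OmY row_mul row_diag_mx mxE -scalemxAl -rowE. Qed.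

Lemma row_unitmx_neq0 (F : fieldType) (n : nat) (Om : 'M[F]_n) (k : 'I_n) :
  Om \in unitmx -> row k Om != 0.
Proof.
move=> Om_unit; apply/eqP => /(congr1 (mulmx^~ (invmx Om))).
rewrite -row_mul mulmxV // mul0mx row1 => /rowP/(_ k).
by rewrite !mxE !eqxx /= => /eqP; rewrite oner_eq0.
Qed.

Lemma row_mulmx_shift_prod_eq0 (F : fieldType) (n : nat) (Om Y X M : 'M[F]_n)
    (th : 'I_n -> F) (s : seq F) (i : 'I_n) :
  Om *m Y = diag_mx (\row_k th k) *m Om -> Om *m X = M *m Om ->
  (forall k, M i k != 0 -> th k \in s) ->
  row i Om *m X *m \prod_(a <- s) (Y - a%:M) = 0.
Proof.
move=> OmY OmX supp; rewrite -row_mul OmX row_mul (mulmx_sum_row _ Om) mulmx_suml.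
apply: big1 => k _; rewrite -scalemxAl (mulmx_shift_prod_eig _ (row_left_eig k OmY)).
rewrite scalerA mxE; have [->|/supp ts] := eqVneq (M i k) 0; first by rewrite mul0r scale0r.
by rewrite prod_sub_eq0 // mulr0 scale0r.
Qed.

Theorem proposition9p4 (F : fieldType) (d : nat) (hd : (3 <= d)%N)
  (Es : 'I_d.+1 -> 'M[F]_d.+1) (A : 'M[F]_d.+1)
  (th : 'I_d.+1 -> F) (E : 'I_d.+1 -> 'M[F]_d.+1) (ths : 'I_d.+1 -> F) :
  orth_idem_system Es ->
  (forall i j : 'I_d.+1, (1 < `|(i : int) - (j : int)|)%N ->
     Es i *m A *m Es j = 0) ->
  (forall i j : 'I_d.+1, `|(i : int) - (j : int)|%N = 1%N ->
     Es i *m A *m Es j != 0) ->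
  mult_free_eigs A th ->
  bipartite Es A ->
  (forall i, primitive_idem A th i (E i)) ->
  injective ths ->
  normalizing Es A (th ord0) ->
  is_tail E (dual_mx ths Es) ord0 (inord 1) ->
  exists c : F, forall j : nat, (3 <= j <= d)%N ->
    (ths (inord j) - ths (inord (j - 3))) /
      (ths (inord j.-1) - ths (inord (j - 2))) = c.
Proof.
move=> Es_sys far near mfree bip prim ths_inj norm tail.
have [P [Y [P_unit APY PAsP [Y_hollow Y_adj Y_rowsum]]]] :=
  normalizing_hollow_tridiagonal ths Es_sys far near bip norm.
have [V [V_unit AV EV]] := primitive_idem_diag mfree prim.
set Om := invmx V *m P; set M := invmx V *m dual_mx ths Es *m V.
have Om_unit : Om \in unitmx by rewrite unitmx_mul unitmx_inv V_unit.
have OmY : Om *m Y = diag_mx (\row_k th k) *m Om.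
  by rewrite -mulmxA -APY -[A](mulmxK V_unit) AV !mulmxA mulVmx // mul1mx.
have OmAs : Om *m diag_mx (\row_i ths i) = M *m Om.
  by rewrite -PAsP !mulmxA !mulmxK.
have adj k l : (E k *m dual_mx ths Es *m E l != 0) = (M k l != 0).
  by rewrite !EV conj_delta_sandwich_eq0.
have [c supp1] := tail_second_row_support th tail.
have H0 := row_mulmx_shift_prod_eq0 (i := ord0) OmY OmAs
  (fun k => ltac:(rewrite -adj; exact: tail_first_row_support tail k)).
have H1 := row_mulmx_shift_prod_eq0 (i := inord 1) OmY OmAs
  (fun k => ltac:(rewrite -adj; exact: supp1 k)).
have t01 : th ord0 != th (inord 1).
  by apply/eqP => /mfree.1 /(congr1 val); rewrite /= inordK //; lia.
have [K hK] := hollow_tridiagonal_dual_recurrence Y_hollow Y_adj Y_rowsum hd ths_inj t01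
  (row_left_eig ord0 OmY) (row_unitmx_neq0 ord0 Om_unit)
  (row_left_eig (inord 1) OmY) (row_unitmx_neq0 (inord 1) Om_unit) H0 H1.
exists K => j jd; rewrite hK // mulfK // subr_eq0.
by apply/eqP => /ths_inj /(congr1 val); rewrite /= !inordK; lia.
Qed.
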